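(* Let $h$ be a hive all of whose flatspaces are small triangles or small rhombi, and let $G$ be its associated graph. If $h$ is a vertex (extreme point) of the polytope of all hives having the same border labels as $h$, then $G$ is acyclic (contains no cycle).
   Context: Fix $n\ge1$. Hive vertices: $H=\{(p,q)\in\mathbb{Z}^2:p,q\ge0,\ p+q\le n\}$, placed in the plane at $p(1,0)+q(1/2,\sqrt3/2)$, forming a big triangle subdivided into $n^2$ small unit triangles. A rhombus is the union of two small triangles sharing an edge; for integers $p,q\ge0$ with $p+q\le n-2$ the rhombus inequalities are $h(p+1,q)+h(p,q+1)\ge h(p,q)+h(p+1,q+1)$, $h(p+1,q)+h(p+1,q+1)\ge h(p,q+1)+h(p+2,q)$, $h(p,q+1)+h(p+1,q+1)\ge h(p+1,q)+h(p,q+2)$ (obtuse-vertex sum $\ge$ acute-vertex sum). A hive is $h:H\to\mathbb{R}$ satisfying all of them. Border $B$: vertices with $p=0$, $q=0$ or $p+q=n$; the set of hives with prescribed values on $B$ is a compact polytope. A rhombus is flat if equality holds. Flatspaces are the unions of small triangles in the classes of the equivalence relation generated by ''share an edge and form a flat rhombus''. Associated graph $G$ (defined when every flatspace is a small triangle or a small rhombus): $G$ has one (blue) vertex for each flatspace that is a small triangle, and one (red) vertex for each lattice edge that is a side of a flatspace; each blue vertex is joined to the three red vertices on the sides of its triangle, and for each rhombus flatspace, the red vertices on each pair of opposite sides of the rhombus are joined by an edge. *)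

From HB Require Import structures.
From mathcomp Require Import all_boot all_order all_algebra.
From mathcomp Require Import reals.
From Stdlib Require Import Relations.Relation_Operators.
From Stdlib Require List.
Set Implicit Arguments. Unset Strict Implicit. Unset Printing Implicit Defensive.
Import Order.TTheory GRing.Theory Num.Theory.
Local Open Scope ring_scope.

(** Hive vertices H = {(p,q) : p + q <= n}. Labelings are functions
    nat -> nat -> R; only their values on H matter. *)
Definition inH (n p q : nat) : bool := (p + q <= n)%N.

Definition onB (n p q : nat) : bool :=
  inH n p q && [|| p == 0%N, q == 0%N | (p + q == n)%N].

Definition hive {R : realType} (n : nat) (h : nat -> nat -> R) : Prop :=
  forall p q : nat, (p + q + 2 <= n)%N ->
    [/\ h p.+1 q + h p q.+1 >= h p q + h p.+1 q.+1,
        h p.+1 q + h p.+1 q.+1 >= h p q.+1 + h p.+2 q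
      & h p q.+1 + h p.+1 q.+1 >= h p.+1 q + h p q.+2].

(** Small triangles: Up p q has vertices (p,q),(p+1,q),(p,q+1) (p+q <= n-1);
    Down p q has vertices (p+1,q),(p,q+1),(p+1,q+1) (p+q <= n-2). *)
Inductive tri := Up of nat & nat | Down of nat & nat.

Definition validTri (n : nat) (t : tri) : Prop :=
  match t with
  | Up p q => (p + q + 1 <= n)%N
  | Down p q => (p + q + 2 <= n)%N
  end.

(** Lattice edges, p + q <= n - 1:
    LE Hor p q  = (p,q)--(p+1,q),
    LE Slo p q  = (p,q)--(p,q+1),
    LE Diag p q = (p+1,q)--(p,q+1). *)
Inductive dir := Hor | Slo | Diag.
Inductive ledge := LE of dir & nat & nat.

Definition dir_of (e : ledge) : dir := let: LE d _ _ := e in d.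

Definition side (t : tri) (e : ledge) : Prop :=
  match t with
  | Up p q => e = LE Hor p q \/ e = LE Slo p q \/ e = LE Diag p q
  | Down p q => e = LE Slo p.+1 q \/ e = LE Hor p q.+1 \/ e = LE Diag p q
  end.

Definition upair (t1 t2 a b : tri) : Prop :=
  (t1 = a /\ t2 = b) \/ (t1 = b /\ t2 = a).

(** Every pair of small triangles
    sharing an edge is {Down p q, Up p q}, {Down p q, Up (p+1) q} or
    {Down p q, Up p (q+1)} with p + q <= n - 2. *)
Definition rhomb_flat {R : realType} (n : nat) (h : nat -> nat -> R)
    (t1 t2 : tri) : Prop :=
  exists p q : nat, (p + q + 2 <= n)%N /\
   [\/ upair t1 t2 (Down p q) (Up p q) /\
         h p.+1 q + h p q.+1 = h p q + h p.+1 q.+1,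
       upair t1 t2 (Down p q) (Up p.+1 q) /\
         h p.+1 q + h p.+1 q.+1 = h p q.+1 + h p.+2 q
     | upair t1 t2 (Down p q) (Up p q.+1) /\
         h p q.+1 + h p.+1 q.+1 = h p.+1 q + h p q.+2].

(** The equivalence relation generated by "share an edge and form a flat
    rhombus"; the flatspace of a valid triangle t is its class. *)
Definition flat_equiv {R : realType} (n : nat) (h : nat -> nat -> R) :
  tri -> tri -> Prop := clos_refl_sym_trans tri (rhomb_flat n h).

Definition fs_is_triangle {R : realType} n (h : nat -> nat -> R) (t : tri) :=
  forall t', flat_equiv n h t t' -> t' = t.

Definition fs_is_rhombus {R : realType} n (h : nat -> nat -> R) (t : tri) :=
  exists t', rhomb_flat n h t t' /\
    forall t'', flat_equiv n h t t'' -> t'' = t \/ t'' = t'.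

Definition flatspaces_small {R : realType} n (h : nat -> nat -> R) : Prop :=
  forall t, validTri n t -> fs_is_triangle n h t \/ fs_is_rhombus n h t.

(** e is a side of the flatspace containing t: e is an edge of exactly one
    small triangle of that flatspace (i.e. e lies on its boundary). *)
Definition fs_side {R : realType} n (h : nat -> nat -> R) (t : tri)
    (e : ledge) : Prop :=
  (exists t1, flat_equiv n h t t1 /\ side t1 e) /\
  (forall t1 t2, flat_equiv n h t t1 -> flat_equiv n h t t2 ->
     side t1 e -> side t2 e -> t1 = t2).

Inductive gvert := Blue of tri | Red of ledge.

Definition is_gvert {R : realType} n (h : nat -> nat -> R) (v : gvert) : Prop :=
  match v with
  | Blue t => validTri n t /\ fs_is_triangle n h t
  | Red e => exists t, validTri n t /\ fs_side n h t e
  end.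

(** Edges of G: blue triangle -- red sides of it; red -- red for the two
    pairs of opposite (= distinct parallel) sides of a rhombus flatspace. *)
Definition gadj {R : realType} n (h : nat -> nat -> R) (v w : gvert) : Prop :=
  match v, w with
  | Blue t, Red e | Red e, Blue t =>
      validTri n t /\ fs_is_triangle n h t /\ side t e
  | Red e1, Red e2 =>
      exists t, [/\ validTri n t, fs_is_rhombus n h t,
                    fs_side n h t e1, fs_side n h t e2 &
                    e1 <> e2 /\ dir_of e1 = dir_of e2]
  | Blue _, Blue _ => False
  end.

Fixpoint rel_path (r : gvert -> gvert -> Prop) (x : gvert) (s : seq gvert)
  : Prop :=
  match s with
  | [::] => True
  | y :: s' => r x y /\ rel_path r y s'
  end.

Definition acyclic {R : realType} n (h : nat -> nat -> R) : Prop :=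
  ~ exists (v0 : gvert) (s : seq gvert),
      [/\ (2 <= size s)%N, List.NoDup (v0 :: s),
          (forall v, List.In v (v0 :: s) -> is_gvert n h v),
          rel_path (gadj n h) v0 s & gadj n h (last v0 s) v0].

Definition is_extreme_hive {R : realType} n (h : nat -> nat -> R) : Prop :=
  forall (g1 g2 : nat -> nat -> R) (t : R),
    hive n g1 -> hive n g2 ->
    (forall p q, onB n p q -> g1 p q = h p q) ->
    (forall p q, onB n p q -> g2 p q = h p q) ->
    0 < t < 1 ->
    (forall p q, inH n p q -> h p q = t * g1 p q + (1 - t) * g2 p q) ->
    forall p q, inH n p q -> g1 p q = g2 p q.

From mathcomp Require Import all_boot all_order all_algebra.
From mathcomp Require Import reals boolp.
From mathcomp Require Import zify ring lra.
From Stdlib Require Import Relations.Relation_Operators.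
From Stdlib Require List.
Set Implicit Arguments. Unset Strict Implicit. Unset Printing Implicit Defensive.
Import Order.TTheory GRing.Theory Num.Theory.
Local Open Scope ring_scope.

(* A cycle of G yields a nonzero function W on H that vanishes on the border and
   keeps every flat rhombus of h flat; then h + e W and h - e W are hives with the
   border of h for small e > 0, and h is their midpoint.
   W is built from its increments along lattice edges.  Walking once around the
   cycle, give each red edge it crosses the increment +1 or -1 according to the
   direction of the crossing, and give the short diagonal of every flat rhombus
   the increment that closes its up triangle.  These increments sum to zero around
   every small triangle, because the walk enters a blue triangle through one side
   and leaves it through another, and crosses a rhombus flatspace from a side to
   the opposite one.  So they are the increments of a potential W, which is not
   identically zero since the cycle passes through a red vertex, and which
   vanishes on the border since the walk never crosses a border edge. *)

(** * Triangles and lattice edges *)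

Definition up_of (e : ledge) : tri := let: LE _ p q := e in Up p q.

(* On the border p = 0 (resp. q = 0) the truncated predecessor makes [down_of e]
   a triangle that does not have the edge [e] as a side. *)
Definition down_of (e : ledge) : tri :=
  match e with
  | LE Hor p q => Down p q.-1
  | LE Slo p q => Down p.-1 q
  | LE Diag p q => Down p q
  end.

Definition is_up (t : tri) : bool := if t is Up _ _ then true else false.

Definition interior_edge (n : nat) (e : ledge) : Prop :=
  side (down_of e) e /\ validTri n (down_of e).

Definition inner_edge (d : dir) (p q : nat) : ledge :=
  match d with
  | Hor => LE Hor p q.+1
  | Slo => LE Slo p.+1 q
  | Diag => LE Diag p q
  end.

Lemma down_of_inner_edge d p q : down_of (inner_edge d p q) = Down p q.
Proof. by case: d. Qed.

Lemma side_down_inner_edge d p q : side (Down p q) (inner_edge d p q).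
Proof. by case: d => /=; auto. Qed.

Lemma side_up_of e : side (up_of e) e.
Proof. by case: e => [[] p q] /=; auto. Qed.

Lemma side_cases t e : side t e -> t = up_of e \/ t = down_of e.
Proof. by case: t => p q /= [->|[->|->]]; auto. Qed.

Lemma is_up_up_of e : is_up (up_of e).
Proof. by case: e. Qed.

Lemma is_up_down_of e : is_up (down_of e) = false.
Proof. by case: e => [[]]. Qed.

Lemma up_of_neq_down_of e : up_of e <> down_of e.
Proof. by move=> E; move: (is_up_up_of e); rewrite E is_up_down_of. Qed.

Lemma side_dir_inj t a b : side t a -> side t b -> dir_of a = dir_of b -> a = b.
Proof. by case: t => p q /= [->|[->|->]] [->|[->|->]]. Qed.

Lemma side_eq_either t1 t2 t e :
  side t1 e -> side t2 e -> t1 <> t2 -> side t e -> t = t1 \/ t = t2.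
Proof. by move=> /side_cases[]-> /side_cases[]-> // _ /side_cases[]->; auto. Qed.

Lemma side_opposite t1 t2 e :
  side t1 e -> side t2 e -> t1 <> t2 -> is_up t1 = ~~ is_up t2.
Proof.
by move=> /side_cases[]-> /side_cases[]-> //; rewrite is_up_up_of is_up_down_of.
Qed.

Lemma side_common_unique t1 t2 a b :
  t1 <> t2 -> side t1 a -> side t2 a -> side t1 b -> side t2 b -> a = b.
Proof.
case: t1 t2 => p q [] p' q' ne /= A1 A2 B1 B2;
  case: A1 => [|[|]] ?; case: B1 => [|[|]] ?; subst a b;
  case: A2 => [|[|]] // [] *; case: B2 => [|[|]] // [] *;
  by [] || (congr LE; lia) || (exfalso; lia) || (case: ne; f_equal; lia).
Qed.

(** * Circulations and potentials *)

Section Circulation.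
Context {R : comRingType}.
Implicit Types f g : ledge -> R.

Definition eps (e : ledge) : R := if dir_of e is Slo then -1 else 1.

Definition tsign (t : tri) : R := if is_up t then -1 else 1.

(* The sum of [eps x * f x] over the sides [x] of [t]: orienting each edge from
   its first endpoint as listed for [ledge], the boundary of [t] runs along its
   [Hor] and [Diag] sides forwards and along its [Slo] side backwards. *)
Definition circulation f (t : tri) : R :=
  match t with
  | Up p q => f (LE Hor p q) - f (LE Slo p q) + f (LE Diag p q)
  | Down p q => f (LE Hor p q.+1) - f (LE Slo p.+1 q) + f (LE Diag p q)
  end.

Definition parallel_sides_agree f (t1 t2 : tri) : Prop :=
  forall x y, side t1 x -> side t2 y -> x <> y -> dir_of x = dir_of y -> f x = f y.

Lemma eps_sqr e : eps e * eps e = 1.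
Proof. by rewrite /eps; case: (dir_of e); rewrite ?mulrNN mulr1. Qed.

Lemma tsign_neg t1 t2 : is_up t1 = ~~ is_up t2 -> tsign t1 = - tsign t2.
Proof. by rewrite /tsign => ->; case: (is_up t2); rewrite ?opprK. Qed.

Lemma circulation_ext f g t :
  (forall x, side t x -> f x = g x) -> circulation f t = circulation g t.
Proof. by case: t => p q E; rewrite /circulation !E //=; auto 6. Qed.

Lemma circulation_eq0 f t : (forall x, side t x -> f x = 0) -> circulation f t = 0.
Proof.
move=> f0; rewrite (@circulation_ext f (fun=> 0)) //.
by case: t {f0} => p q /=; rewrite subrr add0r.
Qed.

Lemma circulation_two_sides f t a b :
  side t a -> side t b -> a <> b ->
  (forall x, side t x -> x <> a -> x <> b -> f x = 0) ->
  eps a * f a + eps b * f b = 0 -> circulation f t = 0.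
Proof.
case: t => p q /= [|[|]] -> [|[|]] -> // _ f0 <-; rewrite /eps /=;
  first [ by rewrite (f0 _ (or_introl erefl)) //; ring
        | by rewrite (f0 _ (or_intror (or_introl erefl))) //; ring
        | by rewrite (f0 _ (or_intror (or_intror erefl))) //; ring ].
Qed.

Lemma circulation_rhombus f d p q :
  parallel_sides_agree f (up_of (inner_edge d p q)) (Down p q) ->
  circulation f (Down p q) = circulation f (up_of (inner_edge d p q)).
Proof.
case: d => agree /=; [ rewrite (agree (LE Slo p q.+1) (LE Slo p.+1 q))
                              ?(agree (LE Diag p q.+1) (LE Diag p q)) //=
                     | rewrite (agree (LE Hor p.+1 q) (LE Hor p q.+1))
                              ?(agree (LE Diag p.+1 q) (LE Diag p q)) //=
                     | rewrite (agree (LE Hor p q) (LE Hor p q.+1))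
                              ?(agree (LE Slo p q) (LE Slo p.+1 q)) //= ];
  by [auto | case; lia].
Qed.
End Circulation.

(* [slack d f p q >= 0] is the rhombus inequality for the rhombus made of
   [Down p q] and the up triangle beyond its side [inner_edge d p q]. *)
Definition slack {R : zmodType} (d : dir) (f : nat -> nat -> R) (p q : nat) : R :=
  match d with
  | Hor => f p q.+1 + f p.+1 q.+1 - (f p.+1 q + f p q.+2)
  | Slo => f p.+1 q + f p.+1 q.+1 - (f p q.+1 + f p.+2 q)
  | Diag => f p.+1 q + f p q.+1 - (f p q + f p.+1 q.+1)
  end.

Section Potential.
Variables (R : comRingType) (n : nat) (f : ledge -> R).

Definition potential (p q : nat) : R :=
  \sum_(i < p) f (LE Hor i 0) + \sum_(j < q) f (LE Slo p j).

Lemma potential_Slo p q : potential p q.+1 = potential p q + f (LE Slo p q).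
Proof. by rewrite /potential big_ord_recr addrA. Qed.

Hypothesis f_closed : forall t, validTri n t -> circulation f t = 0.

Lemma potential_Hor p q :
  (p + q + 1 <= n)%N -> potential p.+1 q = potential p q + f (LE Hor p q).
Proof.
elim: q => [|q IH] pq; first by rewrite /potential !big_ord0 !addr0 big_ord_recr.
rewrite !potential_Slo IH; last lia.
have cU : circulation f (Up p q) = 0 by apply: f_closed => /=; lia.
have cD : circulation f (Down p q) = 0 by apply: f_closed => /=; lia.
apply: subr0_eq; rewrite -[RHS](subrr 0) -{1}cU -cD /=; ring.
Qed.

Lemma potential_Diag p q :
  (p + q + 1 <= n)%N -> potential p q.+1 = potential p.+1 q + f (LE Diag p q).
Proof.
move=> pq; have cU : circulation f (Up p q) = 0 by exact: f_closed.
rewrite potential_Slo potential_Hor //.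
apply: subr0_eq; rewrite -[RHS]oppr0 -cU /=; ring.
Qed.

Lemma slack_potential d p q :
  (p + q + 2 <= n)%N -> parallel_sides_agree f (up_of (inner_edge d p q)) (Down p q) ->
  slack d potential p q = 0.
Proof.
move=> pq; case: d => agree /=;
  [ rewrite !potential_Slo (agree (LE Slo p q.+1) (LE Slo p.+1 q))
  | rewrite !potential_Hor ?(agree (LE Hor p.+1 q) (LE Hor p q.+1))
  | rewrite !potential_Hor ?(agree (LE Hor p q) (LE Hor p q.+1)) ];
  by [ring | simpl; auto | case; lia | lia].
Qed.

Lemma potential_eq0_edge :
  (forall p q, inH n p q -> potential p q = 0) ->
  forall e, validTri n (up_of e) -> f e = 0.
Proof.
move=> W0 [[] p q] /= pq.
- by have := potential_Hor pq; rewrite !W0 /inH ?add0r //; lia.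
- by have := potential_Slo p q; rewrite !W0 /inH ?add0r //; lia.
- by have := potential_Diag pq; rewrite !W0 /inH ?add0r //; lia.
Qed.

Hypothesis f_border : forall e, ~ interior_edge n e -> f e = 0.

Lemma potential_border p q : onB n p q -> potential p q = 0.
Proof.
have f_border_down e : ~ side (down_of e) e -> f e = 0.
  by move=> S; apply: f_border => -[].
move=> /andP [pq /or3P [/eqP->|/eqP->|/eqP pqn]].
- rewrite /potential big_ord0 add0r big1 // => j _.
  by apply: f_border_down => /= -[|[|]] [].
- rewrite /potential big_ord0 addr0 big1 // => i _.
  by apply: f_border_down => /= -[|[|]] [].
elim: q p pqn {pq} => [|q IH] p pqn.
  rewrite /potential big_ord0 addr0 big1 // => i _.
  by apply: f_border_down => /= -[|[|]] [].
rewrite potential_Diag; last lia.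
rewrite IH; last lia.
by rewrite add0r; apply: f_border => -[_ /=]; lia.
Qed.

End Potential.

(** * Walking around a cycle *)

Lemma In_nth (T : Type) (x0 : T) (s : seq T) i :
  (i < size s)%N -> List.In (nth x0 s i) s.
Proof.
elim: s i => [|x s IH] [|i] //= lt_i; first by left.
by right; apply: IH.
Qed.

Lemma NoDup_nth_inj (T : Type) (x0 : T) (s : seq T) i j :
  List.NoDup s -> (i < size s)%N -> (j < size s)%N -> nth x0 s i = nth x0 s j -> i = j.
Proof.
elim: s i j => [|x s IH] [|i] [|j] //= /List.NoDup_cons_iff [x_notin uniq_s] lt_i lt_j.
- by move=> E; case: x_notin; rewrite E; apply: In_nth.
- by move=> E; case: x_notin; rewrite -E; apply: In_nth.
- by move=> /IH ->.
Qed.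

Section Walk.
Local Open Scope nat_scope.
Variables (T : Type) (x0 : T) (s : seq T).

Local Notation N := (size s).+1.

Definition walk (i : nat) : T := nth x0 (x0 :: s) (i %% N).

Lemma walk_in i : List.In (walk i) (x0 :: s).
Proof. by apply: In_nth; rewrite ltn_mod. Qed.

Lemma walk_pred i : walk (i + size s).+1 = walk i.
Proof. by rewrite /walk -addnS modnDr. Qed.

Hypothesis s_uniq : List.NoDup (x0 :: s).

Lemma walk_inj i j : walk i = walk j -> i = j %[mod N].
Proof. by move/(NoDup_nth_inj s_uniq); apply; rewrite ltn_mod. Qed.

Lemma walk_succ i j : walk i = walk j -> walk i.+1 = walk j.+1.
Proof.
by move/walk_inj=> E; rewrite /walk -[i.+1]addn1 -[j.+1]addn1 -modnDml E modnDml.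
Qed.

Lemma walk_succ_inj i j : walk i.+1 = walk j.+1 -> walk i = walk j.
Proof.
move/walk_inj=> E.
by rewrite -(walk_pred i) -(walk_pred j) /walk -!addSn -modnDml E modnDml.
Qed.

Lemma walk_neq2 i : 2 <= size s -> walk i <> walk i.+2.
Proof.
move=> s2 /walk_inj /eqP; rewrite -addn2 -{1}[i]addn0 eqn_modDl mod0n modn_small //.
Qed.

End Walk.

Lemma rel_path_nth (r : gvert -> gvert -> Prop) x0 x s k :
  rel_path r x s -> (k < size s)%N -> r (nth x0 (x :: s) k) (nth x0 (x :: s) k.+1).
Proof.
elim: s x k => [|y s IH] x [|k] //= [r_xy path_ys] lt_k //.
exact: IH.
Qed.

Lemma walk_rel (r : gvert -> gvert -> Prop) x0 s i :
  rel_path r x0 s -> r (last x0 s) x0 -> r (walk x0 s i) (walk x0 s i.+1).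
Proof.
move=> path_s last_s; rewrite /walk -[i.+1]addn1 -modnDml.
have : (i %% (size s).+1 < (size s).+1)%N by rewrite ltn_mod.
rewrite ltnS leq_eqVlt => /orP [/eqP-> | lt_i].
  by rewrite addn1 modnn; move: (nth_last x0 (x0 :: s)) => /= ->.
by rewrite (@modn_small (_ + 1)) addn1 //; apply: rel_path_nth.
Qed.

(** * Perturbing a hive *)

Section Perturbation.
Variables (R : realType) (n : nat).
Implicit Types h W : nat -> nat -> R.

Lemma hiveP h : hive n h <-> forall d p q, (p + q + 2 <= n)%N -> 0 <= slack d h p q.
Proof.
split=> [hh [] p q /hh[? ? ?] | hh p q pq]; rewrite /slack ?subr_ge0 //.
by split; rewrite -subr_ge0; [exact: (hh Diag) | exact: (hh Slo) | exact: (hh Hor)].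
Qed.

Lemma slackD d h W (c : R) p q :
  slack d (fun p q => h p q + c * W p q) p q = slack d h p q + c * slack d W p q.
Proof. by case: d => /=; ring. Qed.

Definition perturb_bound (a b : R) : R := if 0 < a then a / (1 + `|b|) else 1.

Lemma perturb_bound_gt0 a b : 0 < perturb_bound a b.
Proof. by rewrite /perturb_bound; case: ifP => // a_gt0; rewrite divr_gt0 // ltr_wpDr. Qed.

Lemma perturb_bound_spec a b c :
  0 <= a -> (a = 0 -> b = 0) -> `|c| <= perturb_bound a b -> 0 <= a + c * b.
Proof.
rewrite /perturb_bound; case: ifP => [a_gt0 _ _ | /negbT a_le0 a_ge0 ab _].
  have b1_gt0 : 0 < 1 + `|b| by rewrite ltr_wpDr.
  rewrite ler_pdivlMr // => le_c.
  have : `|c * b| <= a by rewrite normrM; have := normr_ge0 c; nra.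
  by rewrite ler_norml => /andP[+ _]; lra.
have a0 : a = 0 by rewrite -leNgt in a_le0; lra.
by rewrite a0 (ab a0) mulr0 addr0.
Qed.

Lemma hive_perturb h W :
  hive n h ->
  (forall d p q, (p + q + 2 <= n)%N -> slack d h p q = 0 -> slack d W p q = 0) ->
  exists2 e, 0 < e & forall c, `|c| <= e -> hive n (fun p q => h p q + c * W p q).
Proof.
move=> /hiveP hh flatW.
pose e := \big[Num.min/1]_(p < n) \big[Num.min/1]_(q < n)
            \big[Num.min/1]_(d <- [:: Hor; Slo; Diag])
              perturb_bound (slack d h p q) (slack d W p q).
exists e.
  apply: lt_bigmin => // p _; apply: lt_bigmin => // q _.
  by apply: lt_bigmin => // d _; exact: perturb_bound_gt0.
move=> c le_ce; apply/hiveP => d p q pq; rewrite slackD.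
apply: perturb_bound_spec; [exact: hh | exact: flatW | apply: (le_trans le_ce)].
have lt_p : (p < n)%N by lia.
have lt_q : (q < n)%N by lia.
apply: (le_trans (bigmin_le _ (Ordinal lt_p) _)) => /=.
apply: (le_trans (bigmin_le _ (Ordinal lt_q) _)) => /=.
by case: d {pq}; rewrite !big_cons big_nil ?ge_min lexx /= ?orbT.
Qed.

Lemma extreme_hive_rigid h W :
  hive n h -> is_extreme_hive n h ->
  (forall p q, onB n p q -> W p q = 0) ->
  (forall d p q, (p + q + 2 <= n)%N -> slack d h p q = 0 -> slack d W p q = 0) ->
  forall p q, inH n p q -> W p q = 0.
Proof.
move=> hh ext W_border flatW p q pq.
have [e e_gt0 hive_he] := hive_perturb hh flatW.
have le_e : `|e| <= e by rewrite gtr0_norm.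
have le_Ne : `|- e| <= e by rewrite normrN gtr0_norm.
have border c p' q' : onB n p' q' -> h p' q' + c * W p' q' = h p' q'.
  by move=> /W_border ->; rewrite mulr0 addr0.
have half : 0 < (2^-1 : R) < 1 by apply/andP; split; lra.
have mid p' q' : inH n p' q' ->
    h p' q' = 2^-1 * (h p' q' + e * W p' q') + (1 - 2^-1) * (h p' q' + - e * W p' q').
  by move=> _; field.
have := ext _ _ _ (hive_he _ le_e) (hive_he _ le_Ne) (border e) (border (- e)) half mid p q pq.
by nra.
Qed.

End Perturbation.

(** * Flatspaces and the graph G *)

Section Flatspaces.
Variables (R : realType) (n : nat) (h : nat -> nat -> R).

Local Notation rf := (rhomb_flat n h).
Local Notation fe := (flat_equiv n h).

Lemma flat_equiv_step t1 t2 : rf t1 t2 -> fe t1 t2. Proof. exact: rst_step. Qed.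
Lemma flat_equiv_sym t1 t2 : fe t1 t2 -> fe t2 t1. Proof. exact: rst_sym. Qed.
Lemma flat_equiv_trans t1 t2 t3 : fe t1 t2 -> fe t2 t3 -> fe t1 t3. Proof. exact: rst_trans. Qed.

Lemma rhomb_flatP t1 t2 :
  rf t1 t2 <-> exists d p q, [/\ (p + q + 2 <= n)%N, slack d h p q = 0 &
                                upair t1 t2 (Down p q) (up_of (inner_edge d p q))].
Proof.
split=> [[p [q [pq [[U E]|[U E]|[U E]]]]] | [[] [p [q [pq /subr0_eq E U]]]]].
- by exists Diag, p, q; split=> //; rewrite /= E subrr.
- by exists Slo, p, q; split=> //; rewrite /= E subrr.
- by exists Hor, p, q; split=> //; rewrite /= E subrr.
- by exists p, q; split=> //; constructor 3.
- by exists p, q; split=> //; constructor 2.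
- by exists p, q; split=> //; constructor 1.
Qed.

Lemma rhomb_flat_inner_edge d p q :
  (p + q + 2 <= n)%N -> slack d h p q = 0 -> rf (up_of (inner_edge d p q)) (Down p q).
Proof. by move=> pq E; apply/rhomb_flatP; exists d, p, q; split=> //; right. Qed.

Lemma rhomb_flat_sym t1 t2 : rf t1 t2 -> rf t2 t1.
Proof.
move=> /rhomb_flatP [d [p [q [pq E U]]]]; apply/rhomb_flatP; exists d, p, q.
by split=> //; case: U => -[-> ->]; [right | left].
Qed.

Lemma rhomb_flat_irrefl t : ~ rf t t.
Proof. by move=> /rhomb_flatP [[] [p [q [_ _ [] [->]]]]]. Qed.

Lemma rhomb_flat_valid t1 t2 : rf t1 t2 -> validTri n t1 /\ validTri n t2.
Proof.
by move=> /rhomb_flatP [d [p [q [pq _ U]]]]; case: U => -[-> ->]; case: d => /=; lia.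
Qed.

Lemma rhomb_flat_is_up t1 t2 : rf t1 t2 -> is_up t1 = ~~ is_up t2.
Proof.
by move=> /rhomb_flatP [d [p [q [_ _ U]]]]; case: U => -[-> ->]; rewrite is_up_up_of.
Qed.

Lemma triangle_not_rhomb_flat t t' : fs_is_triangle n h t -> ~ rf t t'.
Proof.
move=> tri_t rf_tt'; move: (rf_tt').
by rewrite (tri_t _ (flat_equiv_step rf_tt')) => /rhomb_flat_irrefl.
Qed.

Lemma triangle_not_equiv_rhombus t t' :
  fs_is_triangle n h t -> fs_is_rhombus n h t' -> ~ fe t' t.
Proof.
move=> tri_t [t'' [rf_t' _]] fe_t't.
have E1 := tri_t _ (flat_equiv_sym fe_t't).
have E2 := tri_t _ (flat_equiv_trans (flat_equiv_sym fe_t't) (flat_equiv_step rf_t')).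
by move: rf_t'; rewrite E1 E2 => /rhomb_flat_irrefl.
Qed.

Definition flat_edge (e : ledge) : Prop := rf (up_of e) (down_of e) /\ side (down_of e) e.

Lemma flat_edge_inner d p q :
  (p + q + 2 <= n)%N -> slack d h p q = 0 -> flat_edge (inner_edge d p q).
Proof.
move=> pq E; rewrite /flat_edge down_of_inner_edge.
by split; [exact: rhomb_flat_inner_edge | exact: side_down_inner_edge].
Qed.

Lemma triangle_side_not_flat t x : fs_is_triangle n h t -> side t x -> ~ flat_edge x.
Proof.
move=> tri_t /side_cases [E|E] [rf_x _]; rewrite E in tri_t.
  exact: triangle_not_rhomb_flat rf_x.
exact: triangle_not_rhomb_flat (rhomb_flat_sym rf_x).
Qed.

Lemma red_not_flat e : is_gvert n h (Red e) -> ~ flat_edge e.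
Proof.
move=> [t [_ [[t1 [fe_t1 S1]] side_uniq]]] [rf_e Sd].
have [fe_up fe_down] : fe t (up_of e) /\ fe t (down_of e).
  have [E|E] := side_cases S1; rewrite E in fe_t1.
    by split=> //; apply: flat_equiv_trans fe_t1 (flat_equiv_step rf_e).
  by split=> //; apply: flat_equiv_trans fe_t1 (flat_equiv_step (rhomb_flat_sym rf_e)).
exact: up_of_neq_down_of (side_uniq _ _ fe_up fe_down (side_up_of e) Sd).
Qed.

(* [y] is a neighbour of the red vertex [e] in [G] across the triangle [t] on
   one side of [e]: either [y] is the blue vertex [t], or [t] lies in a rhombus
   flatspace of which [e] and the red vertex [y] are opposite sides. *)
Definition attached (e : ledge) (y : gvert) (t : tri) : Prop :=
  side t e /\
  match y with
  | Blue t' => [/\ t' = t, validTri n t & fs_is_triangle n h t]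
  | Red e' => exists t0, [/\ fs_is_rhombus n h t0, fe t0 t, fs_side n h t0 e',
                            e <> e' & dir_of e = dir_of e']
  end.

Lemma gadj_red_attached e y : gadj n h (Red e) y -> exists t, attached e y t.
Proof.
case: y => [t|e'] /=; first by move=> [vt [tri_t S]]; exists t.
move=> [t [_ rh [[t1 [fe1 S1]] _] side_e' [ne de]]].
by exists t1; split=> //; exists t.
Qed.

Lemma gadj_sym x y : gadj n h x y -> gadj n h y x.
Proof.
case: x => [t|e]; case: y => [t'|e'] //=.
move=> [t0 [vt rh S1 S2 [ne de]]]; exists t0; split=> //; split=> //.
by move=> E; apply: ne.
Qed.

Hypothesis small : flatspaces_small n h.

Lemma rhomb_flat_class t1 t2 t : rf t1 t2 -> fe t1 t -> t = t1 \/ t = t2.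
Proof.
move=> rf12; have [v1 _] := rhomb_flat_valid rf12.
case: (small v1) => [/triangle_not_rhomb_flat /(_ rf12) // | [t' [rf1' class1]]].
have [E|->] := class1 _ (flat_equiv_step rf12).
  by move: rf12; rewrite E => /rhomb_flat_irrefl.
exact: class1.
Qed.

Lemma flat_equiv_valid t t' : validTri n t -> fe t t' -> validTri n t'.
Proof.
move=> vt fe_tt'; case: (small vt) => [tri_t | [t'' [rf_t _]]].
  by rewrite (tri_t _ fe_tt').
by case: (rhomb_flat_class rf_t fe_tt') => ->; [| case: (rhomb_flat_valid rf_t)].
Qed.

Lemma rhomb_flat_fs_rhombus t1 t2 : rf t1 t2 -> fs_is_rhombus n h t1.
Proof.
move=> rf12; have [v1 _] := rhomb_flat_valid rf12.
by case: (small v1) => // /triangle_not_rhomb_flat /(_ rf12).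
Qed.

Lemma not_flat_edge t1 t2 x : rf t1 t2 -> side t1 x -> ~ side t2 x -> ~ flat_edge x.
Proof.
move=> rf12 S1 NS2 [rf_x Sd]; apply: NS2.
have [E|E] := side_cases S1; rewrite E in rf12.
- by have [/esym/up_of_neq_down_of // | <-] := rhomb_flat_class rf12 (flat_equiv_step rf_x).
- have := rhomb_flat_class rf12 (flat_equiv_step (rhomb_flat_sym rf_x)).
  case=> [/up_of_neq_down_of // | <-].
  exact: side_up_of.
Qed.

Lemma attached_valid e y t : attached e y t -> validTri n t.
Proof.
case: y => [t'|e'] [_ A]; first by case: A.
case: A => t0 [[t1 [rf01 _]] fe0 _ _ _].
exact: flat_equiv_valid (rhomb_flat_valid rf01).1 fe0.
Qed.

Lemma attached_inj e y y' t : attached e y t -> attached e y' t -> y = y'.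
Proof.
case: y => [t1|e1] [S A]; case: y' => [t2|e2] [_ A'].
- by case: A => -> _ _; case: A' => -> _ _.
- case: A => -> _ tri_t; case: A' => t0 [rh fe0 _ _ _].
  by case: (triangle_not_equiv_rhombus tri_t rh fe0).
- case: A' => -> _ tri_t; case: A => t0 [rh fe0 _ _ _].
  by case: (triangle_not_equiv_rhombus tri_t rh fe0).
case: A => t0 [[t' [rf0 _]] fe0 [[t1 [fe1 S1]] _] ne de].
case: A' => t0' [_ fe0' [[t1' [fe1' S1']] _] ne' de'].
have class := rhomb_flat_class rf0.
have nt1 : t1 <> t by move=> E; apply: ne; rewrite E in S1; exact: side_dir_inj S S1 de.
have nt1' : t1' <> t.
  by move=> E; apply: ne'; rewrite E in S1'; exact: side_dir_inj S S1' de'.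
have Et1 : t1 = t1'.
  have fe1'' := flat_equiv_trans fe0 (flat_equiv_trans (flat_equiv_sym fe0') fe1').
  move: (class _ fe0) (class _ fe1) (class _ fe1'').
  by case=> ?; case=> ?; case=> ?; subst; congruence.
rewrite -Et1 in S1'; congr Red; apply: side_dir_inj S1 S1' _; by rewrite -de -de'.
Qed.

Lemma rhombus_attached tx ty x y :
  rf tx ty -> side tx x -> side ty y -> x <> y -> dir_of x = dir_of y ->
  attached x (Red y) tx.
Proof.
move=> rf_xy Sx Sy ne de; split=> //; exists tx; split=> //.
- exact: rhomb_flat_fs_rhombus rf_xy.
- exact: rst_refl.
split; first by exists ty; split=> //; apply: flat_equiv_step.
have NSy : ~ side tx y by move=> S; apply: ne; apply: side_dir_inj Sx S de.
by move=> t1 t2 /(rhomb_flat_class rf_xy) [->|->] /(rhomb_flat_class rf_xy) [->|->].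
Qed.

End Flatspaces.

(** * The flow of a cycle of G *)

Section Cycle.
Variables (R : realType) (n : nat) (h : nat -> nat -> R).
Hypothesis small : flatspaces_small n h.
Variables (v0 : gvert) (s : seq gvert).
Hypotheses (s_size : (2 <= size s)%N) (s_uniq : List.NoDup (v0 :: s))
  (s_gvert : forall v, List.In v (v0 :: s) -> is_gvert n h v)
  (s_path : rel_path (gadj n h) v0 s) (s_last : gadj n h (last v0 s) v0).

Local Notation v := (walk v0 s).
Local Notation rf := (rhomb_flat n h).
Local Notation attached := (attached n h).

Lemma cycle_adj i : gadj n h (v i) (v i.+1).
Proof. exact: walk_rel. Qed.

Lemma cycle_neq2 i : v i <> v i.+2.
Proof. exact: walk_neq2. Qed.

Lemma cycle_pred k : v (k + size s).+1 = v k /\ v (k + size s).+2 = v k.+1.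
Proof. by split; [| apply: (walk_succ s_uniq)]; apply: walk_pred. Qed.

Lemma red_crossing k e : v k.+1 = Red e ->
  exists tin tout, [/\ attached e (v k) tin, attached e (v k.+2) tout & tin <> tout].
Proof.
move=> vk.
have [tin Ain] : exists t, attached e (v k) t.
  by apply: gadj_red_attached; rewrite -vk; apply: gadj_sym; apply: cycle_adj.
have [tout Aout] : exists t, attached e (v k.+2) t.
  by apply: gadj_red_attached; rewrite -vk; apply: cycle_adj.
exists tin, tout; split=> // E; rewrite E in Ain.
exact: cycle_neq2 (attached_inj small Ain Aout).
Qed.

Lemma attached_visited k e y t :
  v k.+1 = Red e -> attached e y t -> y = v k \/ y = v k.+2.
Proof.
move=> vk At; have [tin [tout [Ain Aout ne]]] := red_crossing vk.
have [E|E] := side_eq_either Ain.1 Aout.1 ne At.1; rewrite E in At.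
  by left; exact: (attached_inj small At Ain).
by right; exact: (attached_inj small At Aout).
Qed.

Lemma exit_unique k e t t' :
  v k.+1 = Red e -> attached e (v k.+2) t -> attached e (v k.+2) t' -> t = t'.
Proof.
move=> vk At At'; have [tin [tout [Ain Aout ne]]] := red_crossing vk.
have is_out t1 : attached e (v k.+2) t1 -> t1 = tout.
  move=> A1; have [E|//] := side_eq_either Ain.1 Aout.1 ne A1.1.
  by rewrite E in A1; case: (cycle_neq2 (attached_inj small Ain A1)).
by rewrite (is_out _ At) (is_out _ At').
Qed.

Definition exits_into (e : ledge) (t : tri) : Prop :=
  exists j, v j = Red e /\ attached e (v j.+1) t.

(* The cycle crosses each of its red vertices [e] from one side to the other;
   [flow e] is [+eps e] or [-eps e] according as it leaves [e] into its down or
   its up triangle, and [0] when [e] is off the cycle. *)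
Definition flow (e : ledge) : R :=
  eps e * (`[< exits_into e (down_of e) >]%:R - `[< exits_into e (up_of e) >]%:R).

Lemma flow_exit k e t :
  v k.+1 = Red e -> attached e (v k.+2) t -> flow e = eps e * tsign t.
Proof.
move=> vk At.
have exits_t : exits_into e t by exists k.+1.
have exits_only t' : exits_into e t' -> t' = t.
  move=> [j [vj At']]; have /(walk_succ s_uniq) vj1 : v j = v k.+1 by rewrite vj vk.
  by rewrite vj1 in At'; exact: (exit_unique vk At' At).
rewrite /flow /tsign; have [Et|Et] := side_cases At.1.
- rewrite (asboolF (_ : ~ exits_into e (down_of e))); last first.
    by move=> /exits_only; rewrite Et => /esym /up_of_neq_down_of.
  by rewrite asboolT -?Et // Et is_up_up_of sub0r.
- rewrite (asboolF (_ : ~ exits_into e (up_of e))); last first.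
    by move=> /exits_only; rewrite Et => /up_of_neq_down_of.
  by rewrite asboolT -?Et // Et is_up_down_of subr0.
Qed.

Lemma flow_entry k e t :
  v k.+1 = Red e -> attached e (v k) t -> flow e = - (eps e * tsign t).
Proof.
move=> vk At; have [tin [tout [_ Aout _]]] := red_crossing vk.
have ne : tout <> t by move=> E; rewrite E in Aout; exact: cycle_neq2 (attached_inj small At Aout).
by rewrite (flow_exit vk Aout) (tsign_neg (side_opposite Aout.1 At.1 ne)) mulrN.
Qed.

Lemma flow_unvisited e : (forall j, v j <> Red e) -> flow e = 0.
Proof.
move=> unvisited; rewrite /flow !asboolF ?subrr ?mulr0 //.
all: by move=> [j [vj _]]; exact: unvisited vj.
Qed.

Lemma triangle_side_visit t x i :
  validTri n t -> fs_is_triangle n h t -> side t x -> v i = Red x ->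
  exists k, v k.+1 = Blue t /\ (v k = Red x \/ v k.+2 = Red x).
Proof.
move=> vt tri_t Sx vi; have [vk _] := cycle_pred i; rewrite vi in vk.
have At : attached x (Blue t) t by split.
have [E|E] := attached_visited vk At.
  have [vk' vk2'] := cycle_pred (i + size s).
  by exists ((i + size s) + size s); split; [rewrite vk' | right; rewrite vk2'].
by exists (i + size s).+1; split=> //; left.
Qed.

Lemma flow_triangle_off_cycle t x k a b :
  validTri n t -> fs_is_triangle n h t -> side t x -> v k.+1 = Blue t ->
  v k = Red a -> v k.+2 = Red b -> x <> a -> x <> b -> flow x = 0.
Proof.
move=> vt tri_t Sx vk va vb nxa nxb; apply: flow_unvisited => i vi.
have [k' [vk' [E|E]]] := triangle_side_visit vt tri_t Sx vi.
  have : v k' = v k by apply: (walk_succ_inj s_uniq); rewrite vk vk'.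
  by rewrite E va => -[].
have : v k'.+2 = v k.+2 by apply: (walk_succ s_uniq); rewrite vk vk'.
by rewrite E vb => -[].
Qed.

Lemma circulation_flow_triangle t :
  validTri n t -> fs_is_triangle n h t -> circulation flow t = 0.
Proof.
move=> vt tri_t.
have [[k vk]|unvisited] := pselect (exists k, v k.+1 = Blue t); last first.
  apply: circulation_eq0 => x Sx; apply: flow_unvisited => i vi.
  have [k [vk _]] := triangle_side_visit vt tri_t Sx vi.
  by apply: unvisited; exists k.
have := cycle_adj k; have := cycle_adj k.+1; rewrite vk.
case va: (v k) => [//|a]; case vb: (v k.+2) => [//|b] /= [_ [_ Sb]] [_ [_ Sa]].
have nab : a <> b by move=> E; case: (cycle_neq2 (i := k)); rewrite va vb E.
have At x : side t x -> attached x (Blue t) t by split.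
have [vk' vk2'] := cycle_pred k.
have flow_a : flow a = eps a * tsign t.
  by apply: (flow_exit (k := k + size s)); rewrite ?vk2' ?vk' ?va ?vk //; apply: At.
have flow_b : flow b = - (eps b * tsign t).
  by apply: (flow_entry (k := k.+1)); rewrite ?vk //; apply: At.
apply: (circulation_two_sides Sa Sb nab).
  by move=> x Sx; apply: flow_triangle_off_cycle vt tri_t Sx vk va vb.
by rewrite flow_a flow_b mulrN !mulrA !eps_sqr !mul1r subrr.
Qed.

Lemma flow_rhombus_step k tx ty x y :
  rf tx ty -> side tx x -> side ty y -> x <> y -> dir_of x = dir_of y ->
  v k.+1 = Red x -> v k.+2 = Red y -> flow x = flow y.
Proof.
move=> rf_xy Sx Sy ne de vx vy.
have Axy := rhombus_attached small rf_xy Sx Sy ne de.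
have Ayx := rhombus_attached small (rhomb_flat_sym rf_xy) Sy Sx (nesym ne) (esym de).
rewrite (flow_exit vx (_ : attached x (v k.+2) tx)) ?vy //.
rewrite (flow_entry vy (_ : attached y (v k.+1) ty)) ?vx //.
by rewrite (tsign_neg (rhomb_flat_is_up rf_xy)) /eps de mulrN.
Qed.

Lemma flow_rhombus_visited i tx ty x y :
  rf tx ty -> side tx x -> side ty y -> x <> y -> dir_of x = dir_of y ->
  v i = Red x -> flow x = flow y.
Proof.
move=> rf_xy Sx Sy ne de vi; have [vk _] := cycle_pred i; rewrite vi in vk.
have [E|E] := attached_visited vk (rhombus_attached small rf_xy Sx Sy ne de).
  have [vk' vk2'] := cycle_pred (i + size s); rewrite -E in vk'; rewrite vk in vk2'.
  exact/esym/(flow_rhombus_step (rhomb_flat_sym rf_xy) Sy Sx (nesym ne) (esym de) vk' vk2').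
exact: flow_rhombus_step rf_xy Sx Sy ne de vk (esym E).
Qed.

Lemma flow_rhombus tx ty x y :
  rf tx ty -> side tx x -> side ty y -> x <> y -> dir_of x = dir_of y ->
  flow x = flow y.
Proof.
move=> rf_xy Sx Sy ne de.
have [[i vi]|unvisited_x] := pselect (exists i, v i = Red x).
  exact: (flow_rhombus_visited rf_xy Sx Sy ne de vi).
have [[i vi]|unvisited_y] := pselect (exists i, v i = Red y).
  exact/esym/(flow_rhombus_visited (rhomb_flat_sym rf_xy) Sy Sx (nesym ne) (esym de) vi).
by rewrite !flow_unvisited // => i vi; [apply: unvisited_y | apply: unvisited_x]; exists i.
Qed.

(* On the short diagonal of a flat rhombus, which is not a vertex of [G], the
   gradient takes the value that closes the circulation around its up triangle. *)
Definition closing_value (e : ledge) : R :=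
  match e with
  | LE Hor p q => flow (LE Slo p q) - flow (LE Diag p q)
  | LE Slo p q => flow (LE Hor p q) + flow (LE Diag p q)
  | LE Diag p q => flow (LE Slo p q) - flow (LE Hor p q)
  end.

Definition grad (e : ledge) : R :=
  if pselect (flat_edge n h e) then closing_value e else flow e.

Lemma grad_flow e : ~ flat_edge n h e -> grad e = flow e.
Proof. by rewrite /grad; case: pselect. Qed.

Lemma grad_closing e : flat_edge n h e -> grad e = closing_value e.
Proof. by rewrite /grad; case: pselect. Qed.

Section FlatRhombus.
Variables (d : dir) (p q : nat).
Hypotheses (pq : (p + q + 2 <= n)%N) (flat : slack d h p q = 0).

Local Notation tu := (up_of (inner_edge d p q)).

Lemma grad_rhombus_side x :
  side tu x \/ side (Down p q) x -> x <> inner_edge d p q -> grad x = flow x.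
Proof.
have rf_ud := rhomb_flat_inner_edge pq flat.
have ne_ud : tu <> Down p q by case: d {rf_ud}.
have common y : side tu y -> side (Down p q) y -> y = inner_edge d p q.
  move=> Su Sd; apply: side_common_unique ne_ud Su Sd _ _.
    exact: side_up_of.
  exact: side_down_inner_edge.
move=> [S|S] nx; apply: grad_flow.
  by apply: (not_flat_edge small rf_ud S) => /(common _ S).
by apply: (not_flat_edge small (rhomb_flat_sym rf_ud) S) => /common /(_ S).
Qed.

Lemma grad_parallel : parallel_sides_agree grad tu (Down p q).
Proof.
move=> x y Sx Sy ne de.
have inner_u : side tu (inner_edge d p q) := side_up_of _.
have inner_d := side_down_inner_edge d p q.
have nx : x <> inner_edge d p q.
  by move=> Ex; apply: ne; rewrite Ex in de *; exact: side_dir_inj inner_d Sy de.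
have ny : y <> inner_edge d p q.
  by move=> Ey; apply: ne; rewrite Ey in de *; exact: side_dir_inj Sx inner_u de.
rewrite !grad_rhombus_side; auto.
exact: flow_rhombus (rhomb_flat_inner_edge pq flat) Sx Sy ne de.
Qed.

End FlatRhombus.

Lemma circulation_grad_up d p q :
  (p + q + 2 <= n)%N -> slack d h p q = 0 -> circulation grad (up_of (inner_edge d p q)) = 0.
Proof.
move=> pq flat; have fl := flat_edge_inner pq flat.
have side_flow := grad_rhombus_side pq flat.
case: d {pq flat} fl side_flow => fl side_flow;
  rewrite /= (grad_closing fl) /= !side_flow //=; by [ring | left; simpl; auto].
Qed.

Lemma circulation_grad t : validTri n t -> circulation grad t = 0.
Proof.
move=> vt; case: (small vt) => [tri_t | [t' [/rhomb_flatP [d [p [q [pq flat U]]]] _]]].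
  rewrite (@circulation_ext _ _ flow) => [|x Sx]; first exact: circulation_flow_triangle.
  exact/grad_flow/(triangle_side_not_flat tri_t).
case: U => -[-> _]; last exact: circulation_grad_up.
by rewrite (circulation_rhombus (grad_parallel pq flat)) circulation_grad_up.
Qed.

Lemma grad_border e : ~ interior_edge n e -> grad e = 0.
Proof.
move=> not_int; rewrite grad_flow; last first.
  by move=> [rf_e Sd]; apply: not_int; split=> //; case: (rhomb_flat_valid rf_e).
apply: flow_unvisited => j vj; have [vk _] := cycle_pred j; rewrite vj in vk.
have [tin [tout [Ain Aout ne]]] := red_crossing vk.
have interior y t : attached e y t -> t = down_of e -> interior_edge n e.
  move=> At Et; rewrite /interior_edge -Et.
  by split; [exact: At.1 | exact: (attached_valid small At)].
apply: not_int; case: (side_cases Ain.1) => Ein; last exact: interior Ain Ein.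
case: (side_cases Aout.1) => Eout; last exact: interior Aout Eout.
by case: ne; rewrite Ein Eout.
Qed.

Lemma grad_nonzero : exists2 e, grad e != 0 & validTri n (up_of e).
Proof.
have [j [e vj]] : exists j e, v j = Red e.
  have := cycle_adj 0; case E0: (v 0) => [t|e]; last by exists 0%N, e.
  by case E1: (v 1) => [t'|e'] //; exists 1%N, e'.
have [vk _] := cycle_pred j; rewrite vj in vk.
have [tin [tout [Ain Aout ne]]] := red_crossing vk.
exists e.
  rewrite grad_flow; last by apply: red_not_flat; rewrite -vj; apply: s_gvert; exact: walk_in.
  rewrite (flow_exit vk Aout) mulf_neq0 // /eps /tsign.
    by case: (dir_of e); rewrite ?oppr_eq0 oner_eq0.
  by case: (is_up tout); rewrite ?oppr_eq0 oner_eq0.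
have [->|->] := side_eq_either Ain.1 Aout.1 ne (side_up_of e).
  exact: (attached_valid small Ain).
exact: (attached_valid small Aout).
Qed.

Lemma cycle_perturbation :
  exists W : nat -> nat -> R,
    [/\ forall p q, onB n p q -> W p q = 0,
        forall d p q, (p + q + 2 <= n)%N -> slack d h p q = 0 -> slack d W p q = 0
      & ~ (forall p q, inH n p q -> W p q = 0)].
Proof.
exists (potential grad); split.
- exact: (potential_border circulation_grad grad_border).
- by move=> d p q pq flat; apply: (slack_potential circulation_grad pq (grad_parallel pq flat)).
- move=> W0; have [e ne0 ve] := grad_nonzero.
  by rewrite (potential_eq0_edge circulation_grad W0 ve) eqxx in ne0.
Qed.

End Cycle.

Theorem lemma3p1 (R : realType) (n : nat) (h : nat -> nat -> R) :
  (1 <= n)%N -> hive n h -> flatspaces_small n h -> is_extreme_hive n h ->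
  acyclic n h.
Proof.
move=> _ hive_h small extreme [v0 [s [s_size s_uniq s_gvert s_path s_last]]].
have [W [W_border W_flat W_nonzero]] :=
  cycle_perturbation small s_size s_uniq s_gvert s_path s_last.
exact: W_nonzero (extreme_hive_rigid hive_h extreme W_border W_flat).
Qed.
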